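(* Let $P\ll Q$ be probability distributions on an arbitrary measurable space $\mathcal{X}$ and let $\delta:=\frac12|P-Q|$ (so $|P-Q|$ is the total variation norm, $\delta\in[0,1]$). Then for all $\lambda>0$, $$\bar F_\lambda(P\|Q)\le\begin{cases}\frac{\lambda\delta}{\lambda-1}, & \lambda\in[\frac{1}{1-\delta},\infty),\\ 1,&\lambda\in(0,\frac1{1-\delta}),\end{cases}$$ and $$\bar F_\lambda(P\|Q)\ge\begin{cases}0,&\lambda\in(\frac1{1-\delta},\infty),\\ 1-(1-\delta)\lambda,&\lambda\in(1,\frac1{1-\delta}],\\ \delta,&\lambda\in(1-\delta,1],\\ 1-\frac{\lambda\delta}{1-\lambda},&\lambda\in(0,1-\delta].\end{cases}$$ Moreover, both bounds are tight: for each $\delta$ and $\lambda$, the right-hand sides equal the supremum, respectively infimum, of $\bar F_\lambda(P\|Q)$ over all pairs $P\ll Q$ with $\frac12|P-Q|=\delta$.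
   Context: For probability measures $P\ll Q$, $\imath_{P\|Q}(x)=\log\frac{dP}{dQ}(x)$ and $\bar F_\lambda(P\|Q):=\mathbb{P}[\imath_{P\|Q}(X)>\log\lambda]$ with $X\sim P$. $|P-Q|=\int|dP-dQ|$. *)

From HB Require Import structures.
From mathcomp Require Import all_boot all_order all_algebra.
From mathcomp Require Import all_classical all_reals all_analysis.
Set Implicit Arguments. Unset Strict Implicit. Unset Printing Implicit Defensive.
Import Order.TTheory GRing.Theory Num.Theory.
Local Open Scope classical_set_scope.
Local Open Scope ring_scope.
Local Open Scope ereal_scope.

(* Radon-Nikodym derivative dP/dQ (defined up to Q-a.e. equality, which
   does not affect anything below since P << Q). *)
Definition rn_deriv d (T : measurableType d) (R : realType)
  (P Q : probability T R) : T -> \bar R := charge.Radon_Nikodym (charge_of_finite_measure P) Q.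

Definition info_density d (T : measurableType d) (R : realType)
  (P Q : probability T R) (x : T) : \bar R :=
  match rn_deriv P Q x with
  | r%:E => if (0 < r)%R then (ln r)%:E else -oo
  | +oo => +oo
  | -oo => -oo
  end.

Definition Fbar d (T : measurableType d) (R : realType)
  (P Q : probability T R) (lambda : R) : \bar R :=
  P [set x | (ln lambda)%:E < info_density P Q x].

(* |P - Q| = \int |dP - dQ|, computed w.r.t. the dominating measure Q:
   \int |dP/dQ - 1| dQ. *)
Definition tv_norm d (T : measurableType d) (R : realType)
  (P Q : probability T R) : \bar R :=
  \int[Q]_x `|rn_deriv P Q x - 1|.

Definition Fbar_upper (R : realType) (delta lambda : R) : R :=
  if (1 / (1 - delta) <= lambda)%R then (lambda * delta / (lambda - 1))%R
  else 1%R.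

(* Lower bound of the theorem, as a function of delta and lambda > 0.
   The extra disjunct (lambda == 1) only matters when delta = 0, lambda = 1,
   where the paper's formula 1 - lambda*delta/(1-lambda) is 0/0; there we use
   delta (= 0), the correct value (P = Q gives Fbar_1 = 0). *)
Definition Fbar_lower (R : realType) (delta lambda : R) : R :=
  if (1 / (1 - delta) < lambda)%R then 0%R
  else if (1 < lambda)%R then (1 - (1 - delta) * lambda)%R
  else if ((1 - delta < lambda)%R || (lambda == 1%R)) then delta
  else (1 - lambda * delta / (1 - lambda))%R.

From HB Require Import structures.
From mathcomp Require Import all_boot all_order all_algebra.
From mathcomp Require Import all_classical all_reals all_analysis.
From mathcomp Require Import measurable_realfun ring lra.
Set Implicit Arguments. Unset Strict Implicit. Unset Printing Implicit Defensive.
Import Order.TTheory GRing.Theory Num.Theory.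
Local Open Scope classical_set_scope.
Local Open Scope ereal_scope.
Local Open Scope ring_scope.

(* Let g = dP/dQ and G = [g > 1].  Splitting |P - Q| = \int |g - 1| dQ along G
   gives delta = P(G) - Q(G), and since g - 1 has the sign of G, both
   P(A) - Q(A) <= delta and Q(A) - P(A) <= delta for every event A.  Now
   Fbar_l = P(A) for A = [g > l].  From l Q(A) <= P(A) the first inequality gives
   (l - 1) P(A) <= l delta, the upper bound.  On B = [g <= l] we have
   P(B) <= l Q(B) <= l (P(B) + delta), i.e. (1 - l) P(B) <= l delta; for l <= 1
   the inclusion G `<=` A gives P(A) >= delta; for l >= 1, splitting B along G
   gives P(A) >= 1 - l (1 - delta).  All constants are attained up to any eps by
   explicit pairs of distributions on two or three points. *)

Section real_probability.
Context d (T : measurableType d) (R : realType) (M : probability T R).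

Definition pr (A : set T) : R := fine (M A).

Lemma prE A : measurable A -> M A = (pr A)%:E.
Proof. by move=> mA; rewrite /pr fineK // fin_num_measure. Qed.

Lemma pr_ge0 A : 0 <= pr A.
Proof. exact: fine_ge0. Qed.

Lemma pr_le1 A : measurable A -> pr A <= 1.
Proof. by move=> mA; rewrite -lee_fin -prE // probability_le1. Qed.

Lemma prC A : measurable A -> pr (~` A) = 1 - pr A.
Proof. by move=> mA; rewrite /pr probability_setC // (prE mA). Qed.

Lemma prDI A B : measurable A -> measurable B ->
  pr A = pr (A `\` B) + pr (A `&` B).
Proof.
move=> mA mB; have mAB := measurableD mA mB; have mAIB := measurableI _ _ mA mB.
by apply/EFin_inj; rewrite EFinD -!prE // (measureDI M mA mB).
Qed.

Lemma pr_le A B : measurable A -> measurable B -> A `<=` B -> pr A <= pr B.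
Proof. by move=> mA mB AB; rewrite -lee_fin -!prE // le_measure // inE. Qed.

Lemma integral_cst_pr l A : measurable A ->
  (\int[M]_(x in A) l%:E = (l * pr A)%:E)%E.
Proof. by move=> mA; rewrite (integral_cst _ mA) EFinM -prE. Qed.

End real_probability.

Section density.
Context d (T : measurableType d) (R : realType) (P Q : probability T R).

Definition density (x : T) : R := fine (rn_deriv P Q x).

Hypothesis PQ : P `<< Q.

Lemma rn_derivE x : rn_deriv P Q x = (density x)%:E.
Proof. by rewrite /density fineK //; apply: Radon_Nikodym_fin_num. Qed.

Lemma integrable_density : Q.-integrable setT (EFin \o density).
Proof.
have := Radon_Nikodym_integrable (nu := charge_of_finite_measure P) PQ.
by apply: eq_integrable => // x _; rewrite /= -rn_derivE.
Qed.

Lemma measurable_density : measurable_fun setT density.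
Proof. exact/measurable_EFinP/(measurable_int _ integrable_density). Qed.

Lemma measure_densityE A : measurable A -> (P A = \int[Q]_(x in A) (density x)%:E)%E.
Proof.
move=> mA; have /= -> := Radon_Nikodym_integral (nu := charge_of_finite_measure P) PQ mA.
by apply: eq_integral => x _; rewrite -rn_derivE.
Qed.

Lemma measurable_density_gt l : measurable [set x | l < density x].
Proof.
have := measurable_density measurableT (measurable_itv `]l, +oo[).
by rewrite setTI; congr measurable; apply/seteqP; split => x /=; rewrite in_itv /= andbT.
Qed.

Let integrable_densityA A : measurable A -> Q.-integrable A (EFin \o density).
Proof. by move=> mA; apply: integrableS integrable_density. Qed.

Lemma pr_density_le l A : measurable A -> (forall x, A x -> density x <= l) ->
  pr P A <= l * pr Q A.
Proof.
move=> mA Al; rewrite -lee_fin -prE // measure_densityE // -integral_cst_pr //.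
apply: le_integral => //; first exact: integrable_densityA.
- exact: finite_measure_integrable_cst.
- by move=> x /set_mem /Al; rewrite lee_fin.
Qed.

Lemma pr_density_ge l A : measurable A -> (forall x, A x -> l <= density x) ->
  l * pr Q A <= pr P A.
Proof.
move=> mA Al; rewrite -lee_fin -prE // measure_densityE // -integral_cst_pr //.
apply: le_integral => //; first exact: finite_measure_integrable_cst.
- exact: integrable_densityA.
- by move=> x /set_mem /Al; rewrite lee_fin.
Qed.

Lemma integral_density_sub1 A : measurable A ->
  (\int[Q]_(x in A) ((density x)%:E - 1%:E) = (pr P A - pr Q A)%:E)%E.
Proof.
move=> mA; rewrite integralB_EFin //; last 2 first.
- exact: integrable_densityA.
- exact: finite_measure_integrable_cst.
by rewrite -measure_densityE // integral_cst_pr // (prE P mA) mul1r.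
Qed.

Lemma integral_1_sub_density A : measurable A ->
  (\int[Q]_(x in A) (1%:E - (density x)%:E) = (pr Q A - pr P A)%:E)%E.
Proof.
move=> mA; rewrite integralB_EFin //; last 2 first.
- exact: finite_measure_integrable_cst.
- exact: integrable_densityA.
by rewrite -measure_densityE // integral_cst_pr // (prE P mA) mul1r.
Qed.

Let G := [set x | 1 < density x].
Let mG : measurable G := measurable_density_gt 1.

Lemma tv_normE : tv_norm P Q = (2 * (pr P G - pr Q G))%:E.
Proof.
have mGC := measurableC mG.
have -> : (tv_norm P Q = \int[Q]_(x in G `|` ~` G) (`|density x - 1|)%:E)%E.
  by rewrite setUv; apply: eq_integral => x _; rewrite rn_derivE -EFinB.
rewrite integral_setU //; last 2 first.
- rewrite setUv; apply/measurable_EFinP/measurableT_comp => //.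
  exact: measurable_funB measurable_density _.
- by rewrite disj_set2E setICr.
rewrite [X in (X + _)%E](eq_integral (fun x => (density x)%:E - 1%:E)%E); last first.
  by move=> x /set_mem /ltW gx; rewrite -EFinB ger0_norm // subr_ge0.
rewrite [X in (_ + X)%E](eq_integral (fun x => 1%:E - (density x)%:E)%E); last first.
  move=> x /set_mem /negP; rewrite -leNgt => gx.
  by rewrite -EFinB ler0_norm ?subr_le0 // opprB.
rewrite integral_density_sub1 // integral_1_sub_density // !prC //; congr _%:E; ring.
Qed.

Lemma pr_sub_le_tv A : measurable A -> pr P A - pr Q A <= pr P G - pr Q G.
Proof.
move=> mA.
rewrite (prDI P mA mG) (prDI Q mA mG) (prDI P mG mA) (prDI Q mG mA) !(setIC G).
have : pr P (A `\` G) <= 1 * pr Q (A `\` G).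
  apply: pr_density_le; first exact: measurableD.
  by move=> x [_ /negP]; rewrite -leNgt.
have : 1 * pr Q (G `\` A) <= pr P (G `\` A).
  by apply: pr_density_ge => [|x [/ltW //]]; exact: measurableD.
lra.
Qed.

Lemma pr_subC_le_tv A : measurable A -> pr Q A - pr P A <= pr P G - pr Q G.
Proof.
by move=> mA; have := pr_sub_le_tv (measurableC mA); rewrite !prC //; lra.
Qed.

Lemma tv_ge0 : pr Q G <= pr P G.
Proof. by rewrite -[leLHS]mul1r; apply: pr_density_ge => // x /ltW. Qed.

Lemma pr_eq0_of_abs A : measurable A -> pr Q A = 0 -> pr P A = 0.
Proof.
move=> mA QA0; have : Q A = 0%E by rewrite (prE Q mA) QA0.
move/(measure0_null_setP Q mA)/PQ/(measure0_null_setP P mA).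
by rewrite /pr => ->.
Qed.

Lemma tv_lt1 : pr P G - pr Q G < 1.
Proof.
rewrite ltNge; apply/negP => tv1.
have := pr_le1 P mG; have := pr_ge0 Q G => Q_ge0 P_le1.
have := @pr_eq0_of_abs G mG; lra.
Qed.

Lemma tv_eq0 : pr P G = pr Q G -> pr P G = 0.
Proof.
move=> PG_QG; apply: pr_eq0_of_abs => //.
have : (\int[Q]_(x in G) `|(density x - 1)%:E| = 0)%E.
  rewrite (eq_integral (fun x => (density x)%:E - 1%:E)%E).
    by rewrite integral_density_sub1 // PG_QG subrr.
  by move=> x /set_mem /ltW gx; rewrite abse_EFin -EFinB ger0_norm // subr_ge0.
move/ae_eq_integral_abs => -[//| |N [mN QN0 GN]].
  apply/measurable_EFinP/measurable_funB => //.
  exact: measurable_funS measurable_density.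
have GN' : G `<=` N.
  move=> x Gx; apply: GN => /= /(_ Gx) [] /eqP; rewrite subr_eq0 => /eqP dx1.
  by move: Gx; rewrite /G /= dx1 ltxx.
apply/eqP; rewrite eq_le pr_ge0 andbT; apply: le_trans (pr_le Q mG mN GN') _.
by rewrite /pr QN0.
Qed.

Lemma FbarE l : 0 < l -> Fbar P Q l = (pr P [set x | l < density x])%:E.
Proof.
move=> l0; rewrite -(prE P (measurable_density_gt l)) /Fbar; congr (P _).
apply/seteqP; split => x; rewrite /= /info_density rn_derivE /=; case: ifPn => dx0.
- by rewrite lte_fin ltr_ln // posrE.
- by rewrite ltNge leNye.
- by rewrite lte_fin ltr_ln // posrE.
- by move=> /(lt_trans l0); rewrite (negbTE dx0).
Qed.

Let tv := pr P G - pr Q G.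
Let tail l := pr P [set x | l < density x].

Lemma mul_tail_le_tv l : 0 <= l -> (l - 1) * tail l <= l * tv.
Proof.
move=> l0; have mA := measurable_density_gt l.
have : l * pr Q [set x | l < density x] <= tail l.
  by apply: pr_density_ge mA _ => x /ltW.
have := pr_sub_le_tv mA; rewrite -/tv -/(tail l); nra.
Qed.

Lemma mul_tail_compl_le_tv l : 0 <= l -> (1 - l) * (1 - tail l) <= l * tv.
Proof.
move=> l0; have mB := measurableC (measurable_density_gt l).
have : pr P (~` [set x | l < density x]) <= l * pr Q (~` [set x | l < density x]).
  by apply: pr_density_le mB _ => x /negP; rewrite -leNgt.
have := pr_subC_le_tv mB; rewrite -/tv.
have := prC P (measurable_density_gt l); rewrite -/(tail l); nra.
Qed.

Lemma tv_le_tail l : l <= 1 -> tv <= tail l.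
Proof.
move=> l1; have : pr P G <= tail l.
  by apply: pr_le mG (measurable_density_gt l) _ => x /(le_lt_trans l1).
by have := pr_ge0 Q G; rewrite /tv; lra.
Qed.

Lemma tail_ge_one_sub_mul l : 1 <= l -> 1 - l * (1 - tv) <= tail l.
Proof.
move=> l1; rewrite /tail /tv; set A := [set x | l < density x].
have mA : measurable A := measurable_density_gt l; have mB := measurableC mA.
have mBG := measurableI _ _ mB mG.
have : pr P (~` A `&` G) <= l * pr Q (~` A `&` G).
  by apply: pr_density_le mBG _ => x [/negP]; rewrite -leNgt.
have : pr P (~` A `\` G) <= pr P (~` G).
  by apply: pr_le; [exact: measurableD | exact: measurableC | move=> x []].
have : pr Q (~` A `&` G) <= pr Q G by apply: pr_le mBG mG _ => x [].
have := prDI P mB mG; have := prC P mG; have := prC P mA; have := pr_le1 P mG.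
have := pr_ge0 Q (~` A `&` G); nra.
Qed.

End density.

Section bound_arithmetic.
Variables (R : realType) (delta l a : R).
Hypothesis delta01 : 0 <= delta < 1.

Lemma Fbar_lower_le : 0 <= a -> (1 - l) * (1 - a) <= l * delta ->
  (l <= 1 -> delta <= a) -> (1 <= l -> 1 - l * (1 - delta) <= a) ->
  Fbar_lower delta l <= a.
Proof.
case/andP: delta01 => d0 d1 a0 small mid large; rewrite /Fbar_lower.
case: ifPn => // _; case: ifPn => [/ltW l1|]; first by rewrite mulrC large.
rewrite -leNgt => l1; case: ifPn => [_|]; first exact: mid.
rewrite negb_or -leNgt => /andP[l1d /negPf ln1].
have {l1 ln1} l1 : l < 1 by rewrite lt_neqAle ln1.
by rewrite lerBlDr -lerBlDl ler_pdivlMr ?subr_gt0 // mulrC.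
Qed.

Lemma le_Fbar_upper : a <= 1 -> (l - 1) * a <= l * delta ->
  (delta = 0 -> l = 1 -> a = 0) -> a <= Fbar_upper delta l.
Proof.
case/andP: delta01 => d0 d1 a1 large tv0; rewrite /Fbar_upper.
have d1' : 0 < 1 - delta by rewrite subr_gt0.
case: ifPn => // l_ge; move: l_ge; rewrite ler_pdivrMr // => l_ge.
have [l1|l1] := eqVneq l 1.
  have d00 : delta = 0 by move: l_ge; rewrite l1; lra.
  by rewrite tv0 // d00 mulr0 mul0r.
have l_gt1 : 1 < l by rewrite lt_neqAle eq_sym l1 /=; nra.
by rewrite ler_pdivlMr ?subr_gt0 // mulrC.
Qed.

End bound_arithmetic.

Lemma Fbar_bounds d (T : measurableType d) (R : realType) (P Q : probability T R)
    (delta l : R) :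
  P `<< Q -> tv_norm P Q = (2 * delta)%:E -> 0 < l ->
  ((Fbar_lower delta l)%:E <= Fbar P Q l <= (Fbar_upper delta l)%:E)%E.
Proof.
move=> PQ htv l0; rewrite FbarE // !lee_fin.
have tvE : pr P [set x | 1 < density P Q x] - pr Q [set x | 1 < density P Q x] = delta.
  by move: htv; rewrite tv_normE // => -[]; lra.
have tv01 : 0 <= delta < 1 by rewrite -tvE subr_ge0 tv_ge0 // tv_lt1.
apply/andP; split.
- apply: Fbar_lower_le => //; first exact: pr_ge0.
  + by rewrite -tvE; apply: mul_tail_compl_le_tv => //; exact: ltW.
  + by rewrite -tvE; apply: tv_le_tail.
  + by rewrite -tvE; apply: tail_ge_one_sub_mul.
- apply: le_Fbar_upper => //; first exact/pr_le1/measurable_density_gt.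
  + by rewrite -tvE; apply: mul_tail_le_tv => //; exact: ltW.
  (* at l = 1, delta = 0 the bound is 0 / 0, which evaluates to 0 *)
  + move=> d0 ->; rewrite tv_eq0 //; move: tvE; rewrite d0; lra.
Qed.

Section finite_prob.
Variables (R : realType) (n : nat) (w : nat -> R).
Hypotheses (w_ge0 : forall k, 0 <= w k) (w_sum1 : \sum_(k < n) w k = 1).

Let mu := msum (fun k => mscale (NngNum (w_ge0 k)) (@dirac _ nat k R)) n.

Let muE A : mu A = (\sum_(k < n) w k * \1_A k)%:E.
Proof. by rewrite /mu /msum /= sumEFin. Qed.

(* [mnormalize] leaves a measure of total mass 1 unchanged; the Dirac measure is
   only its fallback for degenerate total masses. *)
Definition finite_prob : probability nat R := mnormalize mu \d_0%N.

Lemma finite_probE A : finite_prob A = (\sum_(k < n) w k * \1_A k)%:E.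
Proof.
have mu1 : mu setT = 1%E.
  rewrite muE -[RHS]/(1%:E) -w_sum1; congr _%:E.
  by apply: eq_bigr => k _; rewrite indicT mulr1.
by rewrite /= /mnormalize /= -/mu mu1 onee_eq0 /= invr1 mule1 muE.
Qed.

Lemma ge0_integral_finite_prob (f : nat -> \bar R) : (forall k, 0 <= f k)%E ->
  (\int[finite_prob]_x f x = \sum_(k < n) (w k)%:E * f k)%E.
Proof.
move=> f0; rewrite (eq_measure_integral mu) => [|A _ _]; last first.
  by etransitivity; [exact: finite_probE | exact/esym/muE].
rewrite ge0_integral_measure_sum //; apply: eq_bigr => k _.
by rewrite ge0_integral_mscale // integral_dirac // diracE in_setT mul1e.
Qed.

End finite_prob.


Section finite_pair.
Variables (R : realType) (n : nat) (p q : nat -> R).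
Hypotheses (p_ge0 : forall k, 0 <= p k) (q_ge0 : forall k, 0 <= q k).
Hypotheses (p_sum1 : \sum_(k < n) p k = 1) (q_sum1 : \sum_(k < n) q k = 1).
Hypothesis p_q0 : forall k, q k = 0 -> p k = 0.

Let P := finite_prob n p_ge0.
Let Q := finite_prob n q_ge0.

Let sum_indic1 (f : nat -> R) k : (k < n)%N -> \sum_(j < n) f j * \1_[set k] j = f k.
Proof.
move=> kn; rewrite (bigD1 (Ordinal kn)) //= big1 ?addr0 => [|j /eqP jk].
  by rewrite indicE mem_set // mulr1.
by rewrite indicE memNset ?mulr0 // => jk'; apply: jk; exact: val_inj.
Qed.

Lemma finite_prob_abs : P `<< Q.
Proof.
move=> N QN A _ AN; move: (QN A I AN); rewrite !finite_probE // => -[] /eqP.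
rewrite psumr_eq0 => [/allP Q0|k _]; last by rewrite mulr_ge0 // indicE.
congr _%:E; apply: big1 => k _; have := Q0 k (mem_index_enum _).
by rewrite mulf_eq0 => /orP[/eqP /p_q0 -> | /eqP ->]; rewrite ?mul0r ?mulr0.
Qed.

Lemma density_finite k : (k < n)%N -> 0 < q k -> density P Q k = p k / q k.
Proof.
move=> kn qk0; have := measure_densityE finite_prob_abs (I : measurable [set k]).
rewrite (eq_integral (fun=> (density P Q k)%:E)) => [|x /set_mem -> //].
rewrite integral_cst_pr // /pr !finite_probE // !sum_indic1 // => -[->].
by rewrite mulfK // gt_eqF.
Qed.

Lemma tv_norm_finite : tv_norm P Q = (\sum_(k < n) `|p k - q k|)%:E.
Proof.
rewrite /tv_norm (eq_integral (fun x => (`|density P Q x - 1|)%:E)); last first.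
  by move=> x _; rewrite (rn_derivE finite_prob_abs) -EFinB.
rewrite ge0_integral_finite_prob // -sumEFin; apply: eq_bigr => -[k kn] _ /=.
have [qk0|qk0] := eqVneq (q k) 0; first by rewrite qk0 p_q0 // mul0e subr0 normr0.
have qk_gt0 : 0 < q k by rewrite lt_def qk0 q_ge0.
rewrite density_finite // -EFinM -{1}(ger0_norm (q_ge0 k)) -normrM.
by rewrite mulrBr mulr1 mulrCA divff // mulr1.
Qed.

Lemma Fbar_finite l : 0 < l ->
  Fbar P Q l = (\sum_(k < n | l * q k < p k) p k)%:E.
Proof.
move=> l0; rewrite (FbarE finite_prob_abs l0) /pr (finite_probE p_ge0 p_sum1) /=.
congr _%:E; rewrite [RHS]big_mkcond; apply: eq_bigr => -[k kn] _ /=.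
have [qk0|qk0] := eqVneq (q k) 0; first by rewrite qk0 p_q0 // mulr0 mul0r ltxx.
have qk_gt0 : 0 < q k by rewrite lt_def qk0 q_ge0.
have lqp : (l < density P Q k) = (l * q k < p k).
  by rewrite density_finite // ltr_pdivlMr // mulrC.
rewrite indicE; case: ifPn => h; first by rewrite mem_set ?mulr1 //= lqp.
by rewrite memNset ?mulr0 //= lqp; exact/negP.
Qed.

Lemma exists_finite_pair :
  exists (d : measure_display) (T : measurableType d) (P Q : probability T R),
    [/\ P `<< Q, tv_norm P Q = (\sum_(k < n) `|p k - q k|)%:E &
        forall l, (0 < l) -> Fbar P Q l = (\sum_(k < n | l * q k < p k) p k)%:E].
Proof.
exists _, nat, P, Q; split; [exact: finite_prob_abs|exact: tv_norm_finite|].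
exact: Fbar_finite.
Qed.

End finite_pair.

(* P = (x, 1 - x) and Q = (x - delta, 1 - x + delta) on two points. *)
Lemma exists_two_point_pair (R : realType) (delta x : R) :
  0 <= delta -> delta < x -> x <= 1 ->
  exists (d : measure_display) (T : measurableType d) (P Q : probability T R),
    [/\ P `<< Q, tv_norm P Q = (2 * delta)%:E &
        forall l, (0 < l) -> Fbar P Q l =
          ((if l * (x - delta) < x then x else 0) +
           (if l * (1 - x + delta) < 1 - x then 1 - x else 0))%:E].
Proof.
move=> d0 dx x1.
have x0 : 0 <= x by lra.
have x1' : 0 <= 1 - x by rewrite subr_ge0.
have xd0 : 0 <= x - delta by rewrite subr_ge0 ltW.
have xd1 : 0 <= 1 - x + delta by rewrite addr_ge0.
have xd_neq0 : x - delta != 0 by rewrite subr_eq0 gt_eqF.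
have [|||||d [T [P [Q [PQ tv Fb]]]]] := @exists_finite_pair R 2
  (fun k => [:: x; 1 - x]`_k) (fun k => [:: x - delta; 1 - x + delta]`_k).
- by case=> [|[|k]] //=; rewrite nth_nil.
- by case=> [|[|k]] //=; rewrite nth_nil.
- by rewrite !big_ord_recl big_ord0 /= addr0 subrKC.
- by rewrite !big_ord_recl big_ord0 /=; lra.
- case=> [/eqP|[|k]] //=; first by rewrite (negbTE xd_neq0).
  by move/eqP; rewrite paddr_eq0 // => /andP[/eqP ->].
exists d, T, P, Q; split => // [|l l0].
  rewrite tv !big_ord_recl big_ord0 /= addr0.
  have -> : x - (x - delta) = delta by ring.
  have -> : 1 - x - (1 - x + delta) = - delta by ring.
  by rewrite normrN ger0_norm //; congr _%:E; lra.
by rewrite Fb // big_mkcond !big_ord_recl big_ord0 /= addr0.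
Qed.

Section two_point_bounds.
Variables (R : realType) (delta x l : R).
Hypotheses (delta_ge0 : 0 <= delta) (delta_lt_x : delta < x) (x_le1 : x <= 1).
Hypothesis l_gt0 : 0 < l.

Lemma exists_two_point_Fbar_ge : l * (x - delta) < x ->
  exists (d : measure_display) (T : measurableType d) (P Q : probability T R),
    [/\ P `<< Q, tv_norm P Q = (2 * delta)%:E & (x%:E <= Fbar P Q l)%E].
Proof.
move=> hit; have [d [T [P [Q [PQ tv Fb]]]]] := exists_two_point_pair delta_ge0 delta_lt_x x_le1.
exists d, T, P, Q; split => //; rewrite Fb // hit lee_fin lerDl.
by case: ifP => // _; rewrite subr_ge0.
Qed.

Lemma exists_two_point_Fbar_le : 1 - x <= l * (1 - x + delta) ->
  exists (d : measure_display) (T : measurableType d) (P Q : probability T R),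
    [/\ P `<< Q, tv_norm P Q = (2 * delta)%:E & (Fbar P Q l <= x%:E)%E].
Proof.
move=> miss; have [d [T [P [Q [PQ tv Fb]]]]] := exists_two_point_pair delta_ge0 delta_lt_x x_le1.
have miss' : (l * (1 - x + delta) < 1 - x) = false by rewrite ltNge miss.
exists d, T, P, Q; split => //; rewrite Fb // miss' addr0 lee_fin.
by case: ifP => // _; rewrite (le_trans delta_ge0) // ltW.
Qed.

End two_point_bounds.

Lemma Fbar_upper_tight_large (R : realType) (delta l eps : R) :
  0 < delta -> 0 < l -> 1 <= l * (1 - delta) -> 0 < eps ->
  exists (d : measure_display) (T : measurableType d) (P Q : probability T R),
    [/\ P `<< Q, tv_norm P Q = (2 * delta)%:E &
        ((l * delta / (l - 1) - eps)%:E < Fbar P Q l)%E].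
Proof.
move=> d_gt0 l0 l_ge e0; have l_gt1 : 1 < l by have := mulr_gt0 l0 d_gt0; lra.
set U : R := l * delta / (l - 1).
have dU : delta < U by rewrite /U ltr_pdivlMr ?subr_gt0 //; lra.
have U1 : U <= 1 by rewrite /U ler_pdivrMr ?subr_gt0 //; lra.
have lt_U y : y < U -> l * (y - delta) < y.
  by rewrite /U ltr_pdivlMr ?subr_gt0 //; lra.
clearbody U.
have h1 : U - eps / 2 < U by lra.
have h2 : (U + delta) / 2 < U by lra.
set x : R := Num.max (U - eps / 2) ((U + delta) / 2).
have x_ge : U - eps / 2 <= x by rewrite le_max lexx.
have x_ge' : (U + delta) / 2 <= x by rewrite le_max lexx orbT.
have x_lt : x < U by rewrite gt_max h1 h2.
clearbody x.
have [|||d [T [P [Q [PQ tv Fb]]]]] := @exists_two_point_Fbar_ge R delta x l (ltW d_gt0) _ _ l0.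
- by lra.
- by lra.
- exact: lt_U.
by exists d, T, P, Q; split => //; apply: lt_le_trans Fb; rewrite lte_fin; lra.
Qed.

Lemma Fbar_upper_tight (R : realType) (delta l eps : R) :
  0 <= delta -> delta < 1 -> 0 < l -> 0 < eps ->
  exists (d : measure_display) (T : measurableType d) (P Q : probability T R),
    [/\ P `<< Q, tv_norm P Q = (2 * delta)%:E &
        ((Fbar_upper delta l - eps)%:E < Fbar P Q l)%E].
Proof.
move=> d0 d1 l0 e0; have omd_gt0 : 0 < 1 - delta by lra.
rewrite /Fbar_upper; case: ifPn => [|/negP]; rewrite ler_pdivrMr // => l_ge; last first.
  have [|d [T [P [Q [PQ tv Fb]]]]] := @exists_two_point_Fbar_ge R delta 1 l d0 d1 (lexx 1) l0.
    by rewrite ltNge; apply/negP.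
  by exists d, T, P, Q; split => //; apply: lt_le_trans Fb; rewrite lte_fin; lra.
have [d_eq0|d_neq0] := eqVneq delta 0; last first.
  by apply: Fbar_upper_tight_large => //; rewrite lt_def d_neq0.
have [//|//|d [T [P [Q [PQ tv _]]]]] := @exists_two_point_pair R delta 1 d0.
exists d, T, P, Q; split => //; apply: lt_le_trans (measure_ge0 P _).
by rewrite d_eq0 mulr0 mul0r sub0r lte_fin oppr_lt0.
Qed.

(* P = (l r, 0, 1 - l r) and Q = (r, delta, s): the first atom has likelihood
   ratio exactly l, so it does not count towards Fbar_l. *)
Lemma Fbar_lower_tight_mid (R : realType) (delta l eps : R) :
  0 <= delta -> delta < 1 -> 1 < l -> l * (1 - delta) <= 1 -> 0 < eps ->
  exists (d : measure_display) (T : measurableType d) (P Q : probability T R),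
    [/\ P `<< Q, tv_norm P Q = (2 * delta)%:E &
        (Fbar P Q l < (1 - (1 - delta) * l + eps)%:E)%E].
Proof.
move=> d0 d1 l1 ld1 e0.
set m : R := Num.min 1 (eps / 2).
have m_gt0 : 0 < m by rewrite lt_min ltr01 divr_gt0.
have m_le1 : m <= 1 by rewrite ge_min lexx.
have m_le : m <= eps / 2 by rewrite ge_min lexx orbT.
clearbody m.
set s : R := (1 - delta) * m; set r : R := (1 - delta) * (1 - m).
have s_gt0 : 0 < s by apply: mulr_gt0; lra.
have r_ge0 : 0 <= r by apply: mulr_ge0; lra.
have rs : r + s = 1 - delta by rewrite /r /s; ring.
have lr_ge : r <= l * r by nra.
have lr_le : l * r + s <= 1 by rewrite /r /s; nra.
have lr_eps : 1 - l * r < 1 - (1 - delta) * l + eps by rewrite /r; nra.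
have lr_ge0 : 0 <= l * r by lra.
have lr_le1 : 0 <= 1 - l * r by lra.
clearbody s r.
have [|||||d [T [P [Q [PQ tv Fb]]]]] := @exists_finite_pair R 3
  (fun k => [:: l * r; 0; 1 - l * r]`_k) (fun k => [:: r; delta; s]`_k).
- by case=> [|[|[|k]]] //=; rewrite nth_nil.
- by case=> [|[|[|k]]] //=; rewrite ?nth_nil // ltW.
- by rewrite !big_ord_recl big_ord0 /=; lra.
- by rewrite !big_ord_recl big_ord0 /=; lra.
- by case=> [|[|[|k]]] //= => [->|]; [rewrite mulr0 | lra].
exists d, T, P, Q; split => //.
  rewrite tv !big_ord_recl big_ord0 /=; congr _%:E.
  rewrite sub0r normrN (ger0_norm d0) !ger0_norm ?subr_ge0 //; lra.
rewrite Fb; last by lra.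
rewrite big_mkcond !big_ord_recl big_ord0 /= ltxx (_ : l * delta < 0 = false).
  by rewrite lte_fin; case: ifP => _; lra.
by apply/negbTE; rewrite -leNgt mulr_ge0 //; lra.
Qed.

Lemma Fbar_lower_tight_near1 (R : realType) (delta l eps : R) :
  0 <= delta -> delta < 1 -> 0 < l -> 1 - delta <= l -> 0 < eps ->
  exists (d : measure_display) (T : measurableType d) (P Q : probability T R),
    [/\ P `<< Q, tv_norm P Q = (2 * delta)%:E & (Fbar P Q l < (delta + eps)%:E)%E].
Proof.
move=> d0 d1 l0 l_ge e0.
set s : R := Num.min (eps / 2) (1 - delta).
have s_gt0 : 0 < s by rewrite lt_min divr_gt0 // subr_gt0.
have s_le : s <= eps / 2 by rewrite ge_min lexx.
have s_le' : s <= 1 - delta by rewrite ge_min lexx orbT.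
clearbody s.
have [|||d [T [P [Q [PQ tv Fb]]]]] :=
  @exists_two_point_Fbar_le R delta (delta + s) l d0 _ _ l0.
- by lra.
- by lra.
- have : 0 <= (l - (1 - delta)) * (1 - s) by apply: mulr_ge0; lra.
  by have := mulr_ge0 d0 (ltW s_gt0); lra.
by exists d, T, P, Q; split => //; apply: le_lt_trans Fb _; rewrite lte_fin; lra.
Qed.

Lemma Fbar_lower_tight_small (R : realType) (delta l eps : R) :
  0 <= delta -> 0 < l -> l <= 1 - delta -> l < 1 -> 0 < eps ->
  exists (d : measure_display) (T : measurableType d) (P Q : probability T R),
    [/\ P `<< Q, tv_norm P Q = (2 * delta)%:E &
        (Fbar P Q l < (1 - l * delta / (1 - l) + eps)%:E)%E].
Proof.
move=> d0 l0 l_le l_lt1 e0.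
set W : R := l * delta / (1 - l).
have W_le : W <= 1 - delta by rewrite /W ler_pdivrMr ?subr_gt0 //; lra.
have W_eq0 : delta = 0 -> W = 0 by move=> d_eq0; rewrite /W d_eq0 mulr0 mul0r.
have W_ge0 : 0 <= W by rewrite /W divr_ge0 ?mulr_ge0 // ?ltW // subr_gt0.
have W_gt0 : 0 < delta -> 0 < W.
  by move=> d_gt0; rewrite /W divr_gt0 ?mulr_gt0 // subr_gt0.
have hW : W * (1 - l) = l * delta by rewrite /W mulfVK // subr_eq0 gt_eqF.
clearbody W.
set t : R := Num.min (eps / 2) W.
have t_le : t <= eps / 2 by rewrite ge_min lexx.
have t_leW : t <= W by rewrite ge_min lexx orbT.
have t_ge0 : 0 <= t by rewrite /t le_min W_ge0 andbT divr_ge0 // ltW.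
have t_gt0 : 0 < delta -> 0 < t.
  by move=> d_gt0; rewrite lt_min divr_gt0 // W_gt0.
clearbody t.
have dx : delta < 1 - W + t.
  have [d_eq0|d_neq0] := eqVneq delta 0; first by rewrite W_eq0 // d_eq0; lra.
  have d_gt0 : 0 < delta by rewrite lt_def d_neq0.
  by have := t_gt0 d_gt0; lra.
have [||d [T [P [Q [PQ tv Fb]]]]] :=
  @exists_two_point_Fbar_le R delta (1 - W + t) l d0 dx _ l0.
- by lra.
- have : 0 <= t * (1 - l) by apply: mulr_ge0; lra.
  by lra.
by exists d, T, P, Q; split => //; apply: le_lt_trans Fb _; rewrite lte_fin; lra.
Qed.

Lemma Fbar_lower_tight (R : realType) (delta l eps : R) :
  0 <= delta -> delta < 1 -> 0 < l -> 0 < eps ->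
  exists (d : measure_display) (T : measurableType d) (P Q : probability T R),
    [/\ P `<< Q, tv_norm P Q = (2 * delta)%:E &
        (Fbar P Q l < (Fbar_lower delta l + eps)%:E)%E].
Proof.
move=> d0 d1 l0 e0; have omd_gt0 : 0 < 1 - delta by lra.
rewrite /Fbar_lower; case: ifPn => [|/negP]; rewrite ltr_pdivrMr // => l_gt.
  have [//|//|d [T [P [Q [PQ tv Fb]]]]] := @exists_two_point_pair R delta 1 d0.
  have miss1 : (l * (1 - delta) < 1) = false by rewrite ltNge ltW.
  have miss2 : (l * (1 - 1 + delta) < 1 - 1) = false.
    by rewrite subrr add0r ltNge mulr_ge0 // ltW.
  by exists d, T, P, Q; split => //; rewrite Fb // miss1 miss2 add0r lte_fin add0r.
have l_le : l * (1 - delta) <= 1 by rewrite leNgt; exact/negP.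
case: ifPn => [l_gt1|]; first exact: Fbar_lower_tight_mid.
rewrite -leNgt => l_le1; case: ifPn => [l_ge|].
  apply: Fbar_lower_tight_near1 => //.
  by case/orP: l_ge => [/ltW //|/eqP ->]; lra.
rewrite negb_or -leNgt => /andP[l_le' l_neq1].
by apply: Fbar_lower_tight_small => //; rewrite lt_neqAle l_neq1 l_le1.
Qed.

Local Open Scope ereal_scope.

Theorem mainTheorem2 (R : realType) :
  (forall (d : measure_display) (T : measurableType d)
          (P Q : probability T R) (delta lambda : R),
      P `<< Q ->
      tv_norm P Q = (2 * delta)%:E ->
      (0 < lambda)%R ->
      (Fbar_lower delta lambda)%:E <= Fbar P Q lambda
      /\ Fbar P Q lambda <= (Fbar_upper delta lambda)%:E)
  /\
  (forall (delta lambda eps : R),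
      (0 <= delta < 1)%R -> (0 < lambda)%R -> (0 < eps)%R ->
      (exists (d : measure_display) (T : measurableType d)
              (P Q : probability T R),
          [/\ P `<< Q, tv_norm P Q = (2 * delta)%:E &
              (Fbar_upper delta lambda - eps)%:E < Fbar P Q lambda])
      /\
      (exists (d : measure_display) (T : measurableType d)
              (P Q : probability T R),
          [/\ P `<< Q, tv_norm P Q = (2 * delta)%:E &
              Fbar P Q lambda < (Fbar_lower delta lambda + eps)%:E])).
Proof.
split=> [d T P Q delta l PQ htv l0 | delta l eps /andP[d0 d1] l0 e0].
  by apply/andP; exact: Fbar_bounds.
by split; [exact: Fbar_upper_tight | exact: Fbar_lower_tight].
Qed.
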